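(* There are $2^{\mathfrak{c}}$ many pairwise non-isomorphic (as linear orders under the usual order of $\mathbb{R}$) $\mathfrak{c}$-dense subsets of $\mathbb{R}$ that are closed under Turing equivalence.
   Context: $\mathfrak{c}=2^{\aleph_0}$. A set $A\subseteq\mathbb{R}$ is $\mathfrak{c}$-dense if $|I\cap A|=\mathfrak{c}$ for every nonempty open interval $I$. A set of reals is closed under Turing equivalence if it contains every real Turing equivalent to one of its elements. *)

From Stdlib Require Import Reals List Arith Cantor.
Import ListNotations.
Open Scope R_scope.

(* Syntax of mu-recursive terms with an oracle call. Arities are not tracked:
   arguments are lists of naturals, missing arguments default to 0. *)
Inductive rterm : Type :=
| RZero : rterm
| RSucc : rterm
| RProj : nat -> rterm
| ROracle : rterm
| RComp : rterm -> list rterm -> rterm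
| RPrim : rterm -> rterm -> rterm
| RMin : rterm -> rterm.

Inductive eval (g : nat -> nat) : rterm -> list nat -> nat -> Prop :=
| ev_zero xs : eval g RZero xs 0
| ev_succ xs : eval g RSucc xs (S (hd 0%nat xs))
| ev_proj i xs : eval g (RProj i) xs (nth i xs 0%nat)
| ev_oracle xs : eval g ROracle xs (g (hd 0%nat xs))
| ev_comp f hs xs ys v :
    evals g hs xs ys -> eval g f ys v -> eval g (RComp f hs) xs v
| ev_prim0 f h xs v :
    eval g f xs v -> eval g (RPrim f h) (0%nat :: xs) v
| ev_primS f h n xs r v :
    eval g (RPrim f h) (n :: xs) r ->
    eval g h (n :: r :: xs) v ->
    eval g (RPrim f h) (S n :: xs) v
| ev_primnil f h v :
    eval g (RPrim f h) [0%nat] v -> eval g (RPrim f h) [] v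
| ev_min f xs n :
    eval g f (n :: xs) 0%nat ->
    (forall m, (m < n)%nat -> exists k, k <> 0%nat /\ eval g f (m :: xs) k) ->
    eval g (RMin f) xs n
with evals (g : nat -> nat) : list rterm -> list nat -> list nat -> Prop :=
| evs_nil xs : evals g [] xs []
| evs_cons h hs xs y ys :
    eval g h xs y -> evals g hs xs ys -> evals g (h :: hs) xs (y :: ys).

Definition Treducible (h g : nat -> nat) : Prop :=
  exists t : rterm, forall n, eval g t [n] (h n).

Definition rat_of_nat (n : nat) : R :=
  let (a, m) := Cantor.of_nat n in
  let (b, d) := Cantor.of_nat m in
  (INR a - INR b) / INR (S d).

(* Characteristic function of the left cut {q in Q | q < x}. *)
Definition cut (x : R) (n : nat) : nat :=
  if Rlt_dec (rat_of_nat n) x then 1%nat else 0%nat.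

Definition Turing_equiv (x y : R) : Prop :=
  Treducible (cut x) (cut y) /\ Treducible (cut y) (cut x).

Definition closed_under_Turing_equiv (A : R -> Prop) : Prop :=
  forall x y, A x -> Turing_equiv x y -> A y.

Definition equipotent (X Y : Type) : Prop :=
  exists f : X -> Y, (forall a b, f a = f b -> a = b) /\ (forall y, exists x, f x = y).

Definition c_dense (A : R -> Prop) : Prop :=
  forall a b : R, a < b -> equipotent {x : R | a < x < b /\ A x} R.

Definition order_isomorphic (A B : R -> Prop) : Prop :=
  exists f : {x : R | A x} -> {x : R | B x},
    (forall a b, f a = f b -> a = b) /\ (forall y, exists x, f x = y) /\
    (forall a b, proj1_sig a < proj1_sig b <-> proj1_sig (f a) < proj1_sig (f b)).

From Stdlib Require Import Reals Lra Lia List Arith ZArith Cantor Classical ClassicalEpsilon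
  FunctionalExtensionality PropExtensionality ProofIrrelevance Relations Wellfounded FinFun.
From mathcomp Require ssreflect ssrfun ssrbool eqtype boolp classical_sets cardinality wochoice.
Import ListNotations.
Open Scope R_scope.

(* Bernstein-style diagonalisation of length continuum.  Well-order "tasks" so that
   every proper initial segment is small (contains no copy of the Cantor space); a
   task is either an interval or a pair (p, k) of a real p and an increasing map k
   on the rationals.  At each stage pick a point x outside the countably many Turing
   classes of the rationals and the small set of Turing classes of earlier points
   and their images under earlier maps; for an interval task x lies in the interval,
   for a pair task the monotone extension H of k also sends x outside these classes.
   F(P) is the union of the Turing classes of the rationals, of the points of the
   interval tasks and of the points of the pair tasks with p in P.  If phi : F(P) ~
   F(Q) and p is in P but not in Q, then at the task (p, phi on the rationals) we
   get phi x = H x, whose class meets neither the rationals, nor the classes of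
   earlier points (choice of x), nor that of x (p is not in Q), nor those of later
   points (they avoid the class of H x). *)

Fixpoint eval_functional g t xs v (H : eval g t xs v) {struct H} :
  forall v', eval g t xs v' -> v = v'
with evals_functional g hs xs ys (H : evals g hs xs ys) {struct H} :
  forall ys', evals g hs xs ys' -> ys = ys'.
Proof.
- destruct H as [| | | |f hs xs ys v Hhs Hf|f h xs v Hf|f h n xs r v Hr Hh|f h v Hv
                 |f xs n Hn Hbelow];
    intros v' H'; inversion H'; subst; try reflexivity.
  + assert (ys = ys0) by (apply (evals_functional _ _ _ _ Hhs); assumption). subst.
    apply (eval_functional _ _ _ _ Hf); assumption.
  + apply (eval_functional _ _ _ _ Hf); assumption.
  + assert (r = r0) by (apply (eval_functional _ _ _ _ Hr); assumption). subst.
    apply (eval_functional _ _ _ _ Hh); assumption.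
  + apply (eval_functional _ _ _ _ Hv); assumption.
  + destruct (lt_eq_lt_dec n v') as [[Hlt|Heq]|Hgt]; [exfalso| assumption |exfalso].
    * match goal with Hb : forall m, (m < v')%nat -> _ |- _ =>
        destruct (Hb n Hlt) as [k [Hk Dk]] end.
      apply Hk. symmetry. apply (eval_functional _ _ _ _ Hn); assumption.
    * destruct (Hbelow v' Hgt) as [k [Hk Dk]].
      apply Hk. apply (eval_functional _ _ _ _ Dk); assumption.
- destruct H as [|h hs xs y ys Hh Hhs]; intros ys' H'; inversion H'; subst; f_equal.
  + apply (eval_functional _ _ _ _ Hh); assumption.
  + apply (evals_functional _ _ _ _ Hhs); assumption.
Qed.

Lemma to_nat_inj a b c d : Cantor.to_nat (a, b) = Cantor.to_nat (c, d) -> a = c /\ b = d.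
Proof.
  intro E. apply (f_equal Cantor.of_nat) in E. rewrite !Cantor.cancel_of_to in E.
  injection E. auto.
Qed.

Fixpoint code_nats (l : list nat) : nat :=
  match l with [] => 0 | a :: l => S (Cantor.to_nat (a, code_nats l)) end.

Lemma code_nats_inj : Injective code_nats.
Proof.
  intro l; induction l as [|a l IH]; intros [|a' l'] E; simpl in E; try discriminate; auto.
  injection E as E. apply to_nat_inj in E as [-> E]. f_equal. auto.
Qed.

Fixpoint code_rterm (t : rterm) : nat :=
  match t with
  | RZero => Cantor.to_nat (0, 0)
  | RSucc => Cantor.to_nat (1, 0)
  | RProj i => Cantor.to_nat (2, i)
  | ROracle => Cantor.to_nat (3, 0)
  | RComp f hs => Cantor.to_nat (4, Cantor.to_nat (code_rterm f, code_nats (map code_rterm hs)))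
  | RPrim f h => Cantor.to_nat (5, Cantor.to_nat (code_rterm f, code_rterm h))
  | RMin f => Cantor.to_nat (6, code_rterm f)
  end%nat.

Fixpoint code_rterm_inj (t u : rterm) {struct t} : code_rterm t = code_rterm u -> t = u.
Proof.
  destruct t as [| |i| |f hs|f h|f], u as [| |i'| |f' hs'|f' h'|f']; cbn [code_rterm]; intro E;
    apply to_nat_inj in E as [Etag E]; try discriminate Etag; try reflexivity.
  - now subst.
  - apply to_nat_inj in E as [Ef Ehs]. apply code_nats_inj in Ehs.
    f_equal; [now apply code_rterm_inj|].
    (* An explicit inner fixpoint, rather than [map_injective], keeps the recursive
       calls on the subterms of [hs] visible to the guard checker. *)
    exact ((fix go (l l' : list rterm) {struct l} :
              map code_rterm l = map code_rterm l' -> l = l' :=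
              match l, l' with
              | [], [] => fun _ => eq_refl
              | h :: l, h' :: l' => fun E =>
                  f_equal2 cons (code_rterm_inj h h' (f_equal (hd 0%nat) E))
                                (go l l' (f_equal (@tl nat) E))
              | [], _ :: _ => fun E => False_ind _ (nil_cons E)
              | _ :: _, [] => fun E => False_ind _ (nil_cons (eq_sym E))
              end) hs hs' Ehs).
  - apply to_nat_inj in E as [Ef Eh]. f_equal; now apply code_rterm_inj.
  - f_equal. now apply code_rterm_inj.
Qed.

Lemma map_injective {A B} (f : A -> B) : Injective f -> Injective (map f).
Proof.
  intros f_inj l; induction l as [|a l IH]; intros [|a' l'] E; simpl in E; try discriminate; auto.
  injection E as Ea El. f_equal; auto.
Qed.

Definition code_chain (l : list rterm) : nat := code_nats (map code_rterm l).

Lemma code_chain_inj : Injective code_chain.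
Proof. intros l l' E. exact (map_injective _ code_rterm_inj _ _ (code_nats_inj _ _ E)). Qed.

Lemma IZR_nat_difference (m : Z) : IZR m = INR (Z.to_nat m) - INR (Z.to_nat (- m)).
Proof.
  rewrite !INR_IZR_INZ.
  destruct m as [|p|p]; simpl; rewrite ?positive_nat_Z, ?IZR_NEG; lra.
Qed.

Lemma rat_of_nat_fraction (m : Z) (d : nat) : exists n, rat_of_nat n = IZR m / INR (S d).
Proof.
  exists (Cantor.to_nat (Z.to_nat m, Cantor.to_nat (Z.to_nat (- m), d))).
  unfold rat_of_nat. rewrite !Cantor.cancel_of_to, IZR_nat_difference. reflexivity.
Qed.

Lemma rat_of_nat_dense x y : x < y -> exists n, x < rat_of_nat n < y.
Proof.
  intro Hxy.
  destruct (archimed_cor1 (y - x)) as [N [HN N_pos]]; [lra|].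
  assert (HN0 : 0 < INR N) by (apply lt_0_INR; exact N_pos).
  set (m := up (x * INR N)).
  destruct (archimed (x * INR N)) as [Hm1 Hm2]; fold m in Hm1, Hm2.
  destruct (rat_of_nat_fraction m (pred N)) as [n Hn].
  rewrite Nat.succ_pred_pos in Hn by exact N_pos.
  exists n. rewrite Hn.
  assert (E : IZR m / INR N = x + (IZR m - x * INR N) / INR N) by (field; lra).
  rewrite E. split.
  - assert (0 < (IZR m - x * INR N) / INR N) by (apply Rdiv_lt_0_compat; lra). lra.
  - assert ((IZR m - x * INR N) / INR N <= / INR N).
    { unfold Rdiv. rewrite <- (Rmult_1_l (/ INR N)) at 2.
      apply Rmult_le_compat_r; [left; apply Rinv_0_lt_compat|]; lra. }
    lra.
Qed.

Lemma cut_ext x y : (forall n, cut x n = cut y n) -> x = y.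
Proof.
  intro H.
  destruct (Rtotal_order x y) as [Hlt|[Heq|Hgt]]; [exfalso| exact Heq |exfalso].
  - destruct (rat_of_nat_dense x y Hlt) as [n Hn]. specialize (H n). unfold cut in H.
    destruct (Rlt_dec (rat_of_nat n) x), (Rlt_dec (rat_of_nat n) y); discriminate || lra.
  - destruct (rat_of_nat_dense y x Hgt) as [n Hn]. specialize (H n). unfold cut in H.
    destruct (Rlt_dec (rat_of_nat n) x), (Rlt_dec (rat_of_nat n) y); discriminate || lra.
Qed.

Lemma wf_minimal {T} (lt : T -> T -> Prop) (P : T -> Prop) :
  well_founded lt -> (exists x, P x) -> exists z, P z /\ forall w, lt w z -> ~ P w.
Proof.
  intros lt_wf [x Px]. apply NNPP. intro Hnone.
  induction x as [x IH] using (well_founded_ind lt_wf).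
  apply Hnone. exists x. split; [exact Px|]. intros w Hw Pw. exact (IH w Hw Pw).
Qed.

Definition sup_of (S : R -> Prop) : R := epsilon (inhabits 0) (is_lub S).

Lemma sup_of_lub (S : R -> Prop) : bound S -> (exists x, S x) -> is_lub S (sup_of S).
Proof.
  intros Sb Sne. unfold sup_of. apply epsilon_spec.
  destruct (completeness S Sb Sne) as [l Hl]. exists l. exact Hl.
Qed.

Definition cantor := nat -> bool.

Definition interleave (F : nat -> cantor) : cantor :=
  fun n => F (fst (Cantor.of_nat n)) (snd (Cantor.of_nat n)).

Lemma interleave_inj : Injective interleave.
Proof.
  intros F F' E. apply functional_extensionality; intro i.
  apply functional_extensionality; intro j.
  pose proof (f_equal (fun G => G (Cantor.to_nat (i, j))) E) as Eij.
  unfold interleave in Eij. rewrite Cantor.cancel_of_to in Eij. exact Eij.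
Qed.

Definition cut_bits (x : R) : cantor := fun n => Nat.eqb (cut x n) 1.

Lemma cut_bits_inj : Injective cut_bits.
Proof.
  intros x y E. apply cut_ext. intro n.
  pose proof (f_equal (fun b => b n) E) as En. unfold cut_bits, cut in *.
  destruct (Rlt_dec (rat_of_nat n) x), (Rlt_dec (rat_of_nat n) y); easy.
Qed.

Lemma first_difference (b b' : cantor) :
  b <> b' -> exists m, b m <> b' m /\ forall j, (j < m)%nat -> b j = b' j.
Proof.
  intro Hne.
  assert (Hex : exists i, b i <> b' i).
  { apply NNPP. intro H. apply Hne. apply functional_extensionality. intro i.
    apply NNPP. intro Hi. apply H. exists i. exact Hi. }
  destruct (wf_minimal lt (fun i => b i <> b' i) lt_wf Hex) as [m [Hm Hmin]].
  exists m. split; [exact Hm|]. intros j Hj. apply NNPP. exact (Hmin j Hj).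
Qed.

Fixpoint ternary_sum (b : cantor) (N : nat) : R :=
  match N with
  | O => 0
  | S N => ternary_sum b N + (if b N then (/3) ^ N else 0)
  end.

Lemma ternary_sum_mono b m k : ternary_sum b m <= ternary_sum b (m + k).
Proof.
  induction k as [|k IH]; [rewrite Nat.add_0_r; lra|].
  rewrite Nat.add_succ_r. simpl.
  assert (0 <= (/3) ^ (m + k)) by (apply pow_le; lra).
  destruct (b (m + k)%nat); lra.
Qed.

Lemma ternary_sum_tail b m k :
  ternary_sum b (m + k) <= ternary_sum b m + (/3) ^ m * (3/2) * (1 - (/3) ^ k).
Proof.
  induction k as [|k IH]; [rewrite Nat.add_0_r; simpl; lra|].
  rewrite Nat.add_succ_r. simpl. rewrite pow_add.
  assert (0 <= (/3) ^ m * (/3) ^ k) by (apply Rmult_le_pos; apply pow_le; lra).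
  destruct (b (m + k)%nat); lra.
Qed.

Lemma ternary_sum_bounds b N : 0 <= ternary_sum b N <= 3/2.
Proof.
  pose proof (ternary_sum_mono b 0 N). pose proof (ternary_sum_tail b 0 N).
  assert (0 <= (/3) ^ N) by (apply pow_le; lra).
  simpl in *. lra.
Qed.

Lemma ternary_sum_agree b b' m :
  (forall i, (i < m)%nat -> b i = b' i) -> ternary_sum b m = ternary_sum b' m.
Proof.
  induction m as [|m IH]; intro H; simpl; [reflexivity|].
  rewrite IH, (H m); [reflexivity | lia | intros; apply H; lia].
Qed.

Definition ternary (b : cantor) : R := sup_of (fun y => exists N, y = ternary_sum b N).

Lemma ternary_lub b : is_lub (fun y => exists N, y = ternary_sum b N) (ternary b).
Proof.
  apply sup_of_lub.
  - exists (3/2). intros y [N ->]. apply ternary_sum_bounds.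
  - exists 0. exists O. reflexivity.
Qed.

Lemma ternary_bounds b : 0 <= ternary b <= 3/2.
Proof.
  destruct (ternary_lub b) as [Hub Hlub]. split.
  - apply Hub. exists O. reflexivity.
  - apply Hlub. intros y [N ->]. apply ternary_sum_bounds.
Qed.

(* The digit 1 at place [m] outweighs all later digits: [3^-m > 3/2 * 3^-(m+1)]. *)
Lemma ternary_lt b b' m :
  (forall i, (i < m)%nat -> b i = b' i) -> b m = true -> b' m = false ->
  ternary b' < ternary b.
Proof.
  intros Hagree Hb Hb'.
  pose proof (ternary_sum_agree b b' m Hagree) as E.
  assert (0 < (/3) ^ m) by (apply pow_lt; lra).
  assert (Lb : ternary_sum b m + (/3) ^ m <= ternary b).
  { apply (proj1 (ternary_lub b)). exists (S m). simpl. rewrite Hb. reflexivity. }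
  assert (Lb' : ternary b' <= ternary_sum b m + (/3) ^ m / 2).
  { apply (proj2 (ternary_lub b')). intros y [N ->].
    destruct (le_lt_dec N (S m)) as [HN|HN].
    - replace (S m) with (N + (S m - N))%nat by lia.
      eapply Rle_trans; [apply ternary_sum_mono|].
      replace (N + (S m - N))%nat with (S m) by lia. simpl. rewrite Hb', E. lra.
    - replace N with (S m + (N - S m))%nat by lia.
      eapply Rle_trans; [apply ternary_sum_tail|]. simpl. rewrite Hb', <- E.
      assert (0 <= (/3) ^ (N - S m)) by (apply pow_le; lra).
      assert (0 <= / 3 * (/3) ^ m * (/3) ^ (N - S m))
        by (repeat apply Rmult_le_pos; lra || (apply pow_le; lra)).
      lra. }
  lra.
Qed.

Lemma ternary_inj : Injective ternary.
Proof.
  intros b b' E. apply NNPP. intro Hne.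
  destruct (first_difference b b' Hne) as [m [Hm Hagree]].
  destruct (b m) eqn:Hbm, (b' m) eqn:Hbm'; try congruence.
  - pose proof (ternary_lt b b' m Hagree Hbm Hbm'). lra.
  - assert (Hagree' : forall j, (j < m)%nat -> b' j = b j) by (intros; symmetry; auto).
    pose proof (ternary_lt b' b m Hagree' Hbm' Hbm). lra.
Qed.

Lemma cantor_into_interval a c :
  a < c -> exists g : cantor -> R, Injective g /\ forall b, a < g b < c.
Proof.
  intro Hac. exists (fun b => a + (c - a) * ((ternary b + 1) / 3)). split.
  - intros b b' E. apply ternary_inj.
    apply Rplus_eq_reg_l, Rmult_eq_reg_l in E; lra.
  - intro b. pose proof (ternary_bounds b).
    assert (0 < (c - a) * ((ternary b + 1) / 3) < c - a).
    { split; [apply Rmult_lt_0_compat; lra|].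
      rewrite <- (Rmult_1_r (c - a)) at 2. apply Rmult_lt_compat_l; lra. }
    lra.
Qed.

Definition small {T} (S : T -> Prop) : Prop :=
  ~ exists g : cantor -> T, Injective g /\ forall c, S (g c).

Lemma not_small_of_injection {T} (S : T -> Prop) (g : cantor -> T) :
  Injective g -> (forall c, S (g c)) -> ~ small S.
Proof. intros g_inj gS HS. apply HS. exists g. auto. Qed.

Lemma interval_not_small a c : a < c -> ~ small (fun x => a < x < c).
Proof.
  intro Hac. destruct (cantor_into_interval a c Hac) as [g [g_inj Hg]].
  exact (not_small_of_injection _ g g_inj Hg).
Qed.

Lemma small_subset {T} (S S' : T -> Prop) : (forall z, S z -> S' z) -> small S' -> small S.
Proof. intros H HS' [g [g_inj gS]]. apply HS'. exists g. auto. Qed.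

Lemma small_singleton {T} (a : T) : small (fun z => z = a).
Proof.
  intros [g [g_inj ga]].
  assert (E : (fun _ => true) = (fun _ : nat => false))
    by (apply g_inj; rewrite (ga (fun _ => true)), (ga (fun _ => false)); reflexivity).
  discriminate (f_equal (fun h => h O) E).
Qed.

(* A diagonal argument: an injection of the Cantor space into the union would
   yield, by choosing for each [n] a value [c n] missed at coordinate [n], a
   point [interleave c] lying in no [A n]. *)
Lemma small_countable_union {T} (A : nat -> T -> Prop) :
  (forall n, small (A n)) -> small (fun z => exists n, A n z).
Proof.
  intros HA [g [g_inj gA]].
  set (G := fun F => g (interleave F)).
  assert (G_inj : Injective G) by (intros F F' E; apply interleave_inj, g_inj, E).
  assert (Hmiss : forall n, exists c, ~ exists F, F n = c /\ A n (G F)).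
  { intro n. apply NNPP. intro Hn.
    assert (Hc : forall c, exists F : nat -> cantor, F n = c /\ A n (G F)).
    { intro c. apply NNPP. intro Hc. apply Hn. exists c. exact Hc. }
    apply (HA n).
    exists (fun c => G (proj1_sig (constructive_indefinite_description _ (Hc c)))). split.
    - intros c c' E. apply G_inj in E.
      destruct (constructive_indefinite_description _ (Hc c)) as [F [HF AF]].
      destruct (constructive_indefinite_description _ (Hc c')) as [F' [HF' AF']].
      simpl in E. subst. reflexivity.
    - intro c. destruct (constructive_indefinite_description _ (Hc c)) as [F [HF AF]]. exact AF. }
  set (c := fun n => proj1_sig (constructive_indefinite_description _ (Hmiss n))).
  destruct (gA (interleave c)) as [m Hm].
  apply (proj2_sig (constructive_indefinite_description _ (Hmiss m))).
  exists c. split; [reflexivity | exact Hm].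
Qed.

Lemma small_or {T} (A B : T -> Prop) : small A -> small B -> small (fun z => A z \/ B z).
Proof.
  intros HA HB.
  apply (small_subset _ (fun z => exists n, (match n with O => A | S _ => B end) z)).
  - intros z [H|H]; [exists O | exists 1%nat]; exact H.
  - apply small_countable_union. intros [|n]; assumption.
Qed.

Lemma small_image {I T} (S : I -> Prop) (f : I -> T) :
  small S -> small (fun z => exists j, S j /\ f j = z).
Proof.
  intros HS [g [g_inj gS]]. apply HS.
  exists (fun c => proj1_sig (constructive_indefinite_description _ (gS c))). split.
  - intros c c' E.
    destruct (constructive_indefinite_description _ (gS c)) as [j [Sj Hj]].
    destruct (constructive_indefinite_description _ (gS c')) as [j' [Sj' Hj']].
    simpl in E. subst. apply g_inj. congruence.
  - intro c. destruct (constructive_indefinite_description _ (gS c)) as [j [Sj Hj]]. exact Sj.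
Qed.

Lemma small_range_nat {T} (f : nat -> T) : small (fun z => exists n, f n = z).
Proof.
  apply (small_subset _ (fun z => exists n, z = f n)).
  - intros z [n <-]. exists n. reflexivity.
  - apply small_countable_union. intro n. apply small_singleton.
Qed.

Lemma small_preimage {T U} (f : T -> U) (S : U -> Prop) :
  Injective f -> small S -> small (fun z => S (f z)).
Proof.
  intros f_inj HS [g [g_inj gS]]. apply HS. exists (fun c => f (g c)). split; [|exact gS].
  intros c c' E. apply g_inj, f_inj, E.
Qed.

Lemma not_small_minus_small {T} (A B : T -> Prop) :
  ~ small A -> small B -> exists z, A z /\ ~ B z.
Proof.
  intros HA HB. apply NNPP. intro H. apply HA.
  apply (small_subset _ B); [|exact HB].
  intros z Az. apply NNPP. intro Bz. apply H. exists z. auto.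
Qed.

Definition rat_increasing (k : nat -> R) : Prop :=
  forall n m, rat_of_nat n < rat_of_nat m -> k n < k m.

Definition rat_extension (k : nat -> R) (x : R) : R :=
  sup_of (fun y => exists n, rat_of_nat n < x /\ y = k n).

Lemma rat_extension_lub k x :
  rat_increasing k ->
  is_lub (fun y => exists n, rat_of_nat n < x /\ y = k n) (rat_extension k x).
Proof.
  intro k_incr. apply sup_of_lub.
  - destruct (rat_of_nat_dense x (x + 1)) as [m Hm]; [lra|].
    exists (k m). intros y [n [Hn ->]]. left. apply k_incr. lra.
  - destruct (rat_of_nat_dense (x - 1) x) as [n Hn]; [lra|].
    exists (k n), n. split; [lra | reflexivity].
Qed.

Lemma rat_extension_strict k x y :
  rat_increasing k -> x < y -> rat_extension k x < rat_extension k y.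
Proof.
  intros k_incr Hxy.
  destruct (rat_of_nat_dense x y Hxy) as [n1 [H1 H2]].
  destruct (rat_of_nat_dense (rat_of_nat n1) y H2) as [n2 [H3 H4]].
  assert (rat_extension k x <= k n1).
  { apply (rat_extension_lub k x k_incr). intros z [n [Hn ->]]. left. apply k_incr. lra. }
  assert (k n2 <= rat_extension k y).
  { apply (rat_extension_lub k y k_incr). exists n2. auto. }
  assert (k n1 < k n2) by (apply k_incr; exact H3).
  lra.
Qed.

Lemma rat_extension_inj k : rat_increasing k -> Injective (rat_extension k).
Proof.
  intros k_incr x y E.
  destruct (Rtotal_order x y) as [L|[Eq|L]]; [exfalso | exact Eq | exfalso];
    apply (rat_extension_strict k) in L; auto; lra.
Qed.

Definition order_iso_on (A B : R -> Prop) (phi : R -> R) : Prop :=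
  (forall z, A z -> B (phi z)) /\ (forall w, B w -> exists z, A z /\ phi z = w) /\
  (forall z z', A z -> A z' -> (z < z' <-> phi z < phi z')).

Lemma order_iso_on_of_isomorphic A B :
  order_isomorphic A B -> exists phi, order_iso_on A B phi.
Proof.
  intros [f [_ [f_surj f_mono]]].
  set (phi := fun z => match excluded_middle_informative (A z) with
                       | left h => proj1_sig (f (exist _ z h)) | right _ => 0 end).
  assert (Hphi : forall z (h : A z), phi z = proj1_sig (f (exist _ z h))).
  { intros z h. unfold phi. destruct (excluded_middle_informative (A z)) as [h'|h'].
    - rewrite (proof_irrelevance _ h h'). reflexivity.
    - contradiction. }
  exists phi. split; [|split].
  - intros z h. rewrite (Hphi z h). apply proj2_sig.
  - intros w h. destruct (f_surj (exist _ w h)) as [[z hz] E]. exists z. split; [exact hz|].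
    rewrite (Hphi z hz), E. reflexivity.
  - intros z z' h h'. rewrite (Hphi z h), (Hphi z' h'). apply (f_mono (exist _ z h) (exist _ z' h')).
Qed.

Lemma order_iso_on_sym A B phi : order_iso_on A B phi -> exists psi, order_iso_on B A psi.
Proof.
  intros [phiA [phi_surj phi_mono]].
  assert (Hinv : forall w, exists z, B w -> A z /\ phi z = w).
  { intro w. destruct (classic (B w)) as [h|h].
    - destruct (phi_surj w h) as [z Hz]. exists z. auto.
    - exists 0. contradiction. }
  set (psi := fun w => proj1_sig (constructive_indefinite_description _ (Hinv w))).
  assert (Hpsi : forall w, B w -> A (psi w) /\ phi (psi w) = w).
  { intros w h. unfold psi.
    destruct (constructive_indefinite_description _ (Hinv w)) as [z Hz]. auto. }
  exists psi. split; [|split].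
  - intros w h. apply Hpsi, h.
  - intros z h. exists (phi z). split; [exact (phiA z h)|].
    destruct (Hpsi (phi z) (phiA z h)) as [Ha Hb].
    destruct (Rtotal_order (psi (phi z)) z) as [L|[E|L]]; [exfalso | exact E | exfalso].
    + apply (phi_mono _ _ Ha h) in L. lra.
    + apply (phi_mono _ _ h Ha) in L. lra.
  - intros w w' h h'. destruct (Hpsi w h) as [Ha Hb], (Hpsi w' h') as [Ha' Hb'].
    rewrite (phi_mono _ _ Ha Ha'), Hb, Hb'. tauto.
Qed.

(* If the supremum were below [phi z], density of [B] would give a [phi z'] in
   between with [z' < z], and then a rational between [z'] and [z] would contradict
   the supremum. *)
Lemma order_iso_on_rat_extension A B phi z :
  order_iso_on A B phi -> (forall n, A (rat_of_nat n)) ->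
  (forall a b, a < b -> exists w, a < w < b /\ B w) ->
  A z -> rat_extension (fun n => phi (rat_of_nat n)) z = phi z.
Proof.
  intros [phiA [phi_surj phi_mono]] Arat Bdense Az.
  assert (k_incr : rat_increasing (fun n => phi (rat_of_nat n)))
    by (intros n m; apply (phi_mono _ _ (Arat n) (Arat m))).
  destruct (rat_extension_lub _ z k_incr) as [Hub Hlub].
  assert (Hphi_ub : is_upper_bound (fun y => exists n, rat_of_nat n < z /\ y = phi (rat_of_nat n)) (phi z))
    by (intros y [n [Hn ->]]; left; apply (phi_mono _ _ (Arat n) Az), Hn).
  destruct (Hlub (phi z) Hphi_ub) as [Hlt|Heq]; [exfalso|exact Heq].
  destruct (Bdense _ _ Hlt) as [w [[Hw1 Hw2] Bw]].
  destruct (phi_surj w Bw) as [z' [Az' <-]].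
  apply (phi_mono _ _ Az' Az) in Hw2.
  destruct (rat_of_nat_dense z' z Hw2) as [n [Hn1 Hn2]].
  assert (phi (rat_of_nat n) <= rat_extension (fun n => phi (rat_of_nat n)) z)
    by (apply Hub; exists n; auto).
  assert (phi z' < phi (rat_of_nat n)) by (apply (phi_mono _ _ Az' (Arat n)), Hn1).
  lra.
Qed.

Definition Turing_class : R -> R -> Prop := clos_refl_sym_trans R Turing_equiv.

Definition oracle_output (a : R) (t : rterm) : R :=
  epsilon (inhabits a) (fun z => forall n, eval (cut a) t [n] (cut z n)).

Lemma oracle_output_spec a z : Turing_equiv a z -> exists t, oracle_output a t = z.
Proof.
  intros [_ [t Ht]]. exists t. apply cut_ext. intro n.
  assert (Hout : forall n, eval (cut a) t [n] (cut (oracle_output a t) n)).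
  { apply (epsilon_spec (inhabits a) (fun z => forall n, eval (cut a) t [n] (cut z n))).
    exists z. exact Ht. }
  exact (eval_functional _ _ _ _ (Hout n) _ (Ht n)).
Qed.

Lemma Turing_class_chain a z : Turing_class a z -> exists l, fold_left oracle_output l a = z.
Proof.
  intro H. apply clos_rst_rst1n_iff in H.
  induction H as [x|x y z Hxy _ [l Hl]]; [exists []; reflexivity|].
  assert (Exy : Turing_equiv x y) by (destruct Hxy as [H|[H1 H2]]; [exact H | split; assumption]).
  destruct (oracle_output_spec x y Exy) as [t <-].
  exists (t :: l). exact Hl.
Qed.

Lemma left_inverse_of_injection {X} (x0 : X) (c : X -> nat) :
  Injective c -> exists d : nat -> X, forall x, d (c x) = x.
Proof.
  intro c_inj. exists (fun n => epsilon (inhabits x0) (fun x => c x = n)). intro x.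
  apply c_inj. apply (epsilon_spec (inhabits x0) (fun y => c y = c x)). exists x. reflexivity.
Qed.

Lemma Turing_class_enumeration :
  exists e : R -> nat -> R, forall a z, Turing_class a z -> exists n, e a n = z.
Proof.
  destruct (left_inverse_of_injection [] code_chain code_chain_inj) as [d Hd].
  exists (fun a n => fold_left oracle_output (d n) a). intros a z Haz.
  destruct (Turing_class_chain a z Haz) as [l Hl].
  exists (code_chain l). rewrite Hd. exact Hl.
Qed.

Module Cardinality.
Import ssreflect ssrfun ssrbool eqtype boolp classical_sets cardinality wochoice.
Local Open Scope classical_set_scope.
Local Open Scope card_scope.

Lemma equipotent_of_injections (X Y : Type) (f : X -> Y) (g : Y -> X) :
  Injective f -> Injective g -> equipotent X Y.
Proof.
move=> f_inj g_inj.
have le_XY : [set: X] #<= [set: Y].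
  by rewrite -(card_le_eql (inj_card_eq (in2W f_inj))); apply: card_leT.
have le_YX : [set: Y] #<= [set: X].
  by rewrite -(card_le_eql (inj_card_eq (in2W g_inj))); apply: card_leT.
have /card_bijP[h [k hK kH]] := Cantor_Bernstein le_XY le_YX.
pose inT T (t : T) : [set: T] := SigSub (mem_set (I : setT t)).
have inT_val T (t : [set: T]) : inT T (val t) = t by exact: val_inj.
exists (fun x => val (h (inT _ x))); split.
- by move=> x x' /val_inj/(can_inj hK) [].
- by move=> y; exists (val (k (inT _ y))); rewrite inT_val kH.
Qed.

Lemma strict_well_order_exists (T : Type) :
  exists lt : T -> T -> Prop, well_founded lt /\ forall a b, lt a b \/ a = b \/ lt b a.
Proof.
have [R Rwo] := well_ordering_principle {classic T}.
have Rch : wo_chain R predT by exact: withinW.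
have Rtot := wo_chainW Rch.
have Ranti := wo_chain_antisymmetric Rch.
exists (fun x y => R x y /\ x <> y); split.
- move=> a; apply: contrapT => Na.
  have [|z [[/asboolP Nz zmin] _]] :=
    Rwo [pred z | `[< ~ Acc (fun x y => R x y /\ x <> y) z >]].
    by exists a; apply/asboolP.
  apply: Nz; constructor => w [Rwz wz]; apply: contrapT => Nw; apply: wz.
  by apply: Ranti; rewrite ?inE //= Rwz zmin //; apply/asboolP.
- move=> a b; have [->|ab] := pselect (a = b); first by right; left.
  by have /orP[Rab|Rba] := Rtot a b isT isT; [left|right; right]; split=> // e; apply: ab.
Qed.

End Cardinality.

Lemma proj1_sig_injective {X} (P : X -> Prop) : Injective (@proj1_sig X P).
Proof. exact (eq_sig_hprop (fun x => proof_irrelevance (P x))). Qed.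

(* Take a well-order of the Cantor space; if some initial segment is not small,
   restrict to the least such segment. *)
Lemma small_segment_order :
  exists (I : Type) (lt : I -> I -> Prop),
    well_founded lt /\ (forall a b, lt a b \/ a = b \/ lt b a) /\
    (forall i, small (fun j => lt j i)) /\ exists e : cantor -> I, Injective e.
Proof.
  destruct (Cardinality.strict_well_order_exists cantor) as [lt [lt_wf lt_tri]].
  destruct (classic (forall z, small (fun j => lt j z))) as [Hall|Hnot].
  { exists cantor, lt. split; [exact lt_wf|]. split; [exact lt_tri|]. split; [exact Hall|].
    exists (fun c => c). intros a b E. exact E. }
  apply not_all_ex_not in Hnot.
  destruct (wf_minimal lt _ lt_wf Hnot) as [z0 [Hz0 Hmin]].
  exists {c : cantor | lt c z0}, (fun i j => lt (proj1_sig i) (proj1_sig j)).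
  split; [|split; [|split]].
  - apply wf_inverse_image, lt_wf.
  - intros a b. destruct (lt_tri (proj1_sig a) (proj1_sig b)) as [H|[H|H]]; auto.
    right; left. apply proj1_sig_injective, H.
  - intros [x Hx] [g [g_inj gS]]. apply (Hmin x Hx).
    apply (not_small_of_injection _ (fun c => proj1_sig (g c))); [|exact gS].
    intros c c' E. apply g_inj, proj1_sig_injective, E.
  - apply NNPP in Hz0. destruct Hz0 as [g [g_inj gS]].
    exists (fun c => exist _ (g c) (gS c)).
    intros c c' E. apply g_inj. exact (f_equal (@proj1_sig _ _) E).
Qed.

Section Construction.

Variables (I : Type) (lt : I -> I -> Prop).
Hypothesis lt_wf : well_founded lt.
Hypothesis lt_trichotomy : forall a b, lt a b \/ a = b \/ lt b a.
Hypothesis segment_small : forall i, small (fun j => lt j i).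
Variable e : cantor -> I.
Hypothesis e_inj : Injective e.

(* Every stage [i] carries a task [task i : nat -> R] (arbitrary when [i] is not of
   the form [stage s]), and every task occurs.
   [task i 0 = 0]: an interval task, asking for a point in [(task i 1, task i 2)]
   (the tag [task i 3] makes continuum many stages share an interval).
   [task i 0 <> 0]: a diagonalisation task for the parameter [task i 1] against the
   map [fun n => task i (n + 2)] on the rationals. *)
Definition stage (s : nat -> R) : I := e (interleave (fun n => cut_bits (s n))).

Definition task (i : I) : nat -> R := epsilon (inhabits (fun _ => 0)) (fun s => stage s = i).

Lemma stage_inj : Injective stage.
Proof.
  intros s s' E. apply functional_extensionality. intro n.
  apply e_inj, interleave_inj in E. apply cut_bits_inj. exact (f_equal (fun F => F n) E).
Qed.

Lemma task_stage s : task (stage s) = s.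
Proof.
  apply stage_inj. unfold task.
  apply (epsilon_spec (inhabits (fun _ => 0)) (fun s0 => stage s0 = stage s)).
  exists s. reflexivity.
Qed.

Definition task_map (i : I) : R -> R := rat_extension (fun n => task i (S (S n))).

(* Injectivity of [task_map i] is what makes the last clause satisfiable: the
   preimage of a small set under an injection is small. *)
Definition admissible (i : I) (U : R -> Prop) (x : R) : Prop :=
  (task i 0 = 0 -> task i 1 < task i 2 -> task i 1 < x < task i 2) /\ ~ U x /\
  (task i 0 <> 0 -> Injective (task_map i) -> ~ U (task_map i x)).

Definition rational_class (z : R) : Prop := exists n, Turing_class (rat_of_nat n) z.

Definition forbidden_by (i : I) (prev : forall j, lt j i -> R) (z : R) : Prop :=
  rational_class z \/
  exists j (h : lt j i), Turing_class (prev j h) z \/ Turing_class (task_map j (prev j h)) z.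

Definition point : I -> R :=
  Fix lt_wf (fun _ => R)
    (fun i prev => epsilon (inhabits 0) (admissible i (forbidden_by i prev))).

Definition forbidden (i : I) (z : R) : Prop :=
  rational_class z \/
  exists j, lt j i /\ (Turing_class (point j) z \/ Turing_class (task_map j (point j)) z).

Lemma point_eq i : point i = epsilon (inhabits 0) (admissible i (forbidden i)).
Proof.
  unfold point. rewrite Fix_eq.
  - f_equal. f_equal. apply functional_extensionality. intro z.
    apply propositional_extensionality. unfold forbidden_by, forbidden. split.
    + intros [H|[j [h H]]]; [left | right; exists j]; auto.
    + intros [H|[j [h H]]]; [left | right; exists j, h]; auto.
  - intros x f g Hfg. replace g with f; [reflexivity|].
    apply functional_extensionality_dep. intro y. apply functional_extensionality. apply Hfg.
Qed.

Lemma forbidden_small i : small (forbidden i).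
Proof.
  destruct Turing_class_enumeration as [enum Henum].
  apply (small_subset _ (fun z => exists n,
           (exists m, enum (rat_of_nat n) m = z) \/
           (exists j, lt j i /\ enum (point j) n = z) \/
           (exists j, lt j i /\ enum (task_map j (point j)) n = z))).
  - intros z [[n Hn]|[j [Hj [H|H]]]].
    + destruct (Henum _ _ Hn) as [m Hm]. exists n. left. exists m. exact Hm.
    + destruct (Henum _ _ H) as [m Hm]. exists m. right; left. exists j. auto.
    + destruct (Henum _ _ H) as [m Hm]. exists m. right; right. exists j. auto.
  - apply small_countable_union. intro n.
    repeat apply small_or; [apply small_range_nat | apply small_image, segment_small ..].
Qed.

Lemma admissible_exists i : exists x, admissible i (forbidden i) x.
Proof.
  set (Target := fun z => task i 0 = 0 -> task i 1 < task i 2 -> task i 1 < z < task i 2).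
  assert (Target_large : ~ small Target).
  { destruct (classic (task i 0 = 0 /\ task i 1 < task i 2)) as [[H0 H12]|Hn].
    - intro Hs. apply (interval_not_small _ _ H12).
      apply (small_subset _ Target); [|exact Hs]. intros z Hz _ _. exact Hz.
    - intro Hs. apply (interval_not_small 0 1); [lra|].
      apply (small_subset _ Target); [|exact Hs]. intros z _ H0 H12. tauto. }
  set (Bad := fun z => forbidden i z \/
                (task i 0 <> 0 /\ Injective (task_map i) /\ forbidden i (task_map i z))).
  assert (Bad_small : small Bad).
  { destruct (classic (Injective (task_map i))) as [Hinj|Hinj].
    - apply (small_subset _ (fun z => forbidden i z \/ forbidden i (task_map i z))).
      + intros z [H|[_ [_ H]]]; auto.
      + apply small_or; [|apply small_preimage; [exact Hinj|]]; apply forbidden_small.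
    - apply (small_subset _ (forbidden i)); [|apply forbidden_small].
      intros z [H|[_ [H _]]]; [exact H | contradiction]. }
  destruct (not_small_minus_small Target Bad Target_large Bad_small) as [z [Hz Hbad]].
  exists z. split; [exact Hz|]. split.
  - intro H. apply Hbad. left. exact H.
  - intros H0 Hinj H. apply Hbad. right. auto.
Qed.

Lemma point_admissible i : admissible i (forbidden i) (point i).
Proof. rewrite point_eq. apply epsilon_spec, admissible_exists. Qed.

Lemma point_inj : Injective point.
Proof.
  intros i i' E.
  destruct (lt_trichotomy i i') as [L|[Eq|L]]; [exfalso | exact Eq | exfalso].
  - apply (proj1 (proj2 (point_admissible i'))). right. exists i.
    rewrite E. split; [exact L | left; apply rst_refl].
  - apply (proj1 (proj2 (point_admissible i))). right. exists i'.
    rewrite E. split; [exact L | left; apply rst_refl].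
Qed.

Definition selected (P : R -> Prop) (i : I) : Prop :=
  task i 0 = 0 \/ (task i 0 <> 0 /\ P (task i 1)).

Definition family (P : R -> Prop) (z : R) : Prop :=
  rational_class z \/ exists i, selected P i /\ Turing_class (point i) z.

Lemma family_closed P : closed_under_Turing_equiv (family P).
Proof.
  intros x y [[n Hn]|[i [Hi Hx]]] Hxy.
  - left. exists n. eapply rst_trans; [exact Hn | apply rst_step, Hxy].
  - right. exists i. split; [exact Hi|]. eapply rst_trans; [exact Hx | apply rst_step, Hxy].
Qed.

Lemma family_rational P n : family P (rat_of_nat n).
Proof. left. exists n. apply rst_refl. Qed.

Definition interval_task (a b r : R) : nat -> R :=
  fun n => match n with 1%nat => a | 2%nat => b | 3%nat => r | _ => 0 end.

Lemma interval_point P a b r :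
  a < b -> a < point (stage (interval_task a b r)) < b /\
           family P (point (stage (interval_task a b r))).
Proof.
  intro Hab. pose proof (proj1 (point_admissible (stage (interval_task a b r)))) as Hin.
  rewrite task_stage in Hin. split; [exact (Hin eq_refl Hab)|].
  right. exists (stage (interval_task a b r)). split; [|apply rst_refl].
  left. rewrite task_stage. reflexivity.
Qed.

Lemma family_dense P a b : a < b -> exists w, a < w < b /\ family P w.
Proof. intro Hab. eexists. exact (interval_point P a b 0 Hab). Qed.

Lemma family_c_dense P : c_dense (family P).
Proof.
  intros a b Hab.
  apply (Cardinality.equipotent_of_injections _ _ (@proj1_sig _ _)
           (fun r => exist _ _ (interval_point P a b r Hab))).
  - apply proj1_sig_injective.
  - intros r r' E. apply (f_equal (@proj1_sig _ _)), point_inj, stage_inj in E.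
    exact (f_equal (fun s => s 3%nat) E).
Qed.

Lemma task_map_image_not_in_family Q i :
  task i 0 <> 0 -> ~ Q (task i 1) -> ~ forbidden i (task_map i (point i)) ->
  ~ family Q (task_map i (point i)).
Proof.
  intros Hpair HQ Hfree [Hrat|[j [Hj Hjy]]]; [apply Hfree; left; exact Hrat|].
  destruct (lt_trichotomy j i) as [L|[<-|L]].
  - apply Hfree. right. exists j. auto.
  - destruct Hj as [H|[_ H]]; contradiction.
  - apply (proj1 (proj2 (point_admissible j))). right. exists i.
    split; [exact L | right; apply rst_sym, Hjy].
Qed.

(* For [p] in [P \ Q], the stage with task [(1, p, phi on the rationals)] gives a point
   of [family P] whose image under [phi] avoids [family Q]. *)
Lemma not_order_iso_on_family P Q p phi :
  P p -> ~ Q p -> ~ order_iso_on (family P) (family Q) phi.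
Proof.
  intros Pp Qp Hiso.
  set (k := fun n => phi (rat_of_nat n)).
  set (i := stage (fun n => match n with O => 1 | 1%nat => p | S (S m) => k m end)).
  assert (task_i : task i = fun n => match n with O => 1 | 1%nat => p | S (S m) => k m end)
    by apply task_stage.
  assert (map_i : task_map i = rat_extension k) by (unfold task_map; rewrite task_i; reflexivity).
  assert (k_incr : rat_increasing k).
  { intros n m. destruct Hiso as [_ [_ phi_mono]].
    apply (phi_mono _ _ (family_rational P n) (family_rational P m)). }
  assert (Hpair : task i 0 <> 0) by (rewrite task_i; simpl; lra).
  assert (Hfree : ~ forbidden i (task_map i (point i))).
  { apply (proj2 (proj2 (point_admissible i))); [exact Hpair|].
    rewrite map_i. apply rat_extension_inj, k_incr. }
  assert (Hx : family P (point i)).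
  { right. exists i. split; [|apply rst_refl]. right. rewrite task_i. auto. }
  assert (Ephi : phi (point i) = task_map i (point i)).
  { rewrite map_i. symmetry.
    apply (order_iso_on_rat_extension (family P) (family Q)); auto.
    - apply family_rational.
    - apply family_dense. }
  apply (task_map_image_not_in_family Q i Hpair); [rewrite task_i; exact Qp | exact Hfree |].
  rewrite <- Ephi. apply (proj1 Hiso), Hx.
Qed.

Lemma family_not_isomorphic P Q : P <> Q -> ~ order_isomorphic (family P) (family Q).
Proof.
  intros Hne Hiso.
  destruct (order_iso_on_of_isomorphic _ _ Hiso) as [phi Hphi].
  assert (Hp : exists p, ~ (P p <-> Q p)).
  { apply NNPP. intro H. apply Hne. apply functional_extensionality. intro p.
    apply propositional_extensionality. apply NNPP. intro H'. apply H. exists p. exact H'. }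
  destruct Hp as [p Hp].
  destruct (classic (P p)) as [Pp|Pp], (classic (Q p)) as [Qp|Qp]; try tauto.
  - exact (not_order_iso_on_family P Q p phi Pp Qp Hphi).
  - destruct (order_iso_on_sym _ _ _ Hphi) as [psi Hpsi].
    exact (not_order_iso_on_family Q P p psi Qp Pp Hpsi).
Qed.

End Construction.

Theorem mainTheorem11 :
  exists F : (R -> Prop) -> (R -> Prop),
    (forall P, c_dense (F P) /\ closed_under_Turing_equiv (F P)) /\
    (forall P Q, P <> Q -> ~ order_isomorphic (F P) (F Q)).
Proof.
  destruct small_segment_order as [I [lt [lt_wf [lt_tri [seg_small [e e_inj]]]]]].
  exists (family I lt lt_wf e).
  split.
  - intro P. split.
    + exact (family_c_dense I lt lt_wf lt_tri seg_small e e_inj P).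
    + exact (family_closed I lt lt_wf e P).
  - exact (family_not_isomorphic I lt lt_wf lt_tri seg_small e e_inj).
Qed.
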